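(* Let $\mathcal{G}_1,\dots,\mathcal{G}_m$ be signed digraphs on $\{1,\dots,n\}$ with signed Laplacians $L_1,\dots,L_m$, and assume each $L_k$ is weight balanced and each $-L_k$ is EEP. Let $Q\in\mathbb{R}^{(n-1)\times n}$ satisfy $QQ^\top=I_{n-1}$ and $Q\mathbf{1}=0$. If there exists a symmetric positive definite $P\in\mathbb{R}^{n\times n}$ such that \[ -QL_kPQ^\top-QPL_k^\top Q^\top\prec 0\quad\text{for all }k=1,\dots,m, \] then $\mathbb{L}=\{L_1,\dots,L_m\}$ is a consensus set for the switched system $\dot{\mathbf{x}}=-L_{\sigma(t)}\mathbf{x}$.
   Context: For a signed digraph with real weighted adjacency matrix $A$ (entries of any sign), the signed Laplacian is $L=\Sigma-A$, $\Sigma=\mathrm{diag}(\sigma_i)$, $\sigma_i=\sum_jA_{ij}$, so $L\mathbf{1}=0$; weight balanced means $L^\top\mathbf{1}=0$. $M$ is EEP if there is $t_0\ge0$ with $e^{Mt}$ entrywise positive for all real $t\ge t_0$. $X\prec0$ means $X$ is symmetric negative definite. A switching signal is a piecewise constant map $\sigma:[0,\infty)\to\{1,\dots,m\}$ with finitely many discontinuities on every bounded interval. $\mathbb{L}$ is a consensus set if for every switching signal and every $\mathbf{x}(0)$ there is $\alpha\in\mathbb{R}$ with $\lim_{t\to\infty}\mathbf{x}(t)=\alpha\mathbf{1}$. *)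

From HB Require Import structures.
From mathcomp Require Import all_boot all_order all_algebra.
From mathcomp Require Import all_classical all_reals all_analysis.
Set Implicit Arguments. Unset Strict Implicit. Unset Printing Implicit Defensive.
Import Order.TTheory GRing.Theory Num.Theory.
Import numFieldNormedType.Exports.
Local Open Scope ring_scope.
Local Open Scope classical_set_scope.

Section Defs.
Variable R : realType.

Definition ones (n : nat) : 'cV[R]_n := const_mx 1.

Definition signed_laplacian (n : nat) (A : 'M[R]_n) : 'M[R]_n :=
  \matrix_(i, j) ((i == j)%:R * (\sum_(l < n) A i l)) - A.

Definition weight_balanced (n : nat) (L : 'M[R]_n) : Prop :=
  L^T *m ones n = 0.

Definition expmx (n : nat) (M : 'M[R]_n) (t : R) : 'M[R]_n :=
  \matrix_(i, j) limn (fun N : nat =>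
      (\sum_(k < N) ((t ^+ k / (k`!)%:R) *: M ^+ k)) i j).

Definition EEP (n : nat) (M : 'M[R]_n) : Prop :=
  exists t0 : R, 0 <= t0 /\
    forall t : R, t0 <= t -> forall i j, 0 < expmx M t i j.

Definition pos_def (n : nat) (X : 'M[R]_n) : Prop :=
  X^T = X /\ forall v : 'cV[R]_n, v != 0 -> 0 < (v^T *m X *m v) 0 0.

Definition neg_def (n : nat) (X : 'M[R]_n) : Prop :=
  X^T = X /\ forall v : 'cV[R]_n, v != 0 -> (v^T *m X *m v) 0 0 < 0.

Definition loc_const (m : nat) (sigma : R -> 'I_m) (t : R) : Prop :=
  exists2 e : R, 0 < e & forall u : R, `|u - t| < e -> sigma u = sigma t.

(* switching signal: piecewise constant on [0, oo) with finitely many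
   discontinuities on every bounded interval: for every T, all points of
   (0, T] except finitely many are points where sigma is locally constant *)
Definition switching_signal (m : nat) (sigma : R -> 'I_m) : Prop :=
  forall T : R, exists s : seq R,
       forall t : R, 0 < t <= T -> t \notin s -> loc_const sigma t.

(* x is a (Caratheodory) solution on [0, oo) of dx/dt = - L_{sigma(t)} x:
   x is continuous on [0, oo), and at every t >= 0 where sigma is locally
   constant, t > 0, x is differentiable with derivative
   - L_{sigma t} x(t). *)
Definition switched_solution (n m : nat) (L : 'I_m -> 'M[R]_n)
    (sigma : R -> 'I_m) (x : R -> 'cV[R]_n) : Prop :=
  (forall i, {within [set t : R | 0 <= t], continuous (fun t => x t i 0)}) /\
  (forall t : R, 0 < t -> loc_const sigma t ->
     forall i, is_derive t 1 (fun s => x s i 0) ((- L (sigma t) *m x t) i 0)).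

Definition consensus_set (n m : nat) (L : 'I_m -> 'M[R]_n) : Prop :=
  forall sigma : R -> 'I_m, switching_signal sigma ->
  forall x : R -> 'cV[R]_n, switched_solution L sigma x ->
  exists alpha : R, forall i, (fun t => x t i 0) @ +oo --> alpha.

End Defs.

From HB Require Import structures.
From mathcomp Require Import all_boot all_order all_algebra.
From mathcomp Require Import all_classical all_reals all_analysis.
From mathcomp Require Import ring lra.
Import Order.TTheory GRing.Theory Num.Theory.
Import numFieldNormedType.Exports.
Set Implicit Arguments. Unset Strict Implicit. Unset Printing Implicit Defensive.
Local Open Scope ring_scope.
Local Open Scope classical_set_scope.

(* Write L_k for the signed Laplacians, so L_k 1 = 0 and (weight balance)
   1^T L_k = 0.  Since the rows of Q are an orthonormal basis of 1^perp, every
   state splits as x = Q^T y + (1^T x / (n+1)) 1 with y = Q x.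
   - Along any solution of x' = -L_sigma x the sum 1^T x is invariant
     (weight balance), so the 1-component of x is constant.
   - The reduced state y obeys y' = -M_sigma y with M_k = Q L_k Q^T.  The
     hypothesis says M_k Pr + Pr M_k^T > 0 for Pr = Q P Q^T > 0, hence
     X = Pr^-1 satisfies X M_k + M_k^T X > 0 and V = y^T X y is a common
     Lyapunov function: V' <= - a V off the switching instants.
   - Comparison (without exponentials): (1 + a t) V(t) is nonincreasing, so
     |y t|^2 = O(1/t), y t --> 0 and x t --> (1^T x 0 / (n+1)) 1.
   The file develops, in order: quadratic-form bounds (via compactness of the
   unit sphere), calculus of functions differentiable off the switching
   instants, the linear algebra of the projection Q^T Q, the dual Lyapunov
   inequality, the decay of switched linear systems, and the limit argument. *)

Section QuadraticForms.
Variable R : realType.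

Definition qform n (X : 'M[R]_n) (v : 'cV[R]_n) : R := (v^T *m X *m v) 0 0.
Definition sqnorm n (v : 'cV[R]_n) : R := qform 1%:M v.

Lemma bilinear_formE n (X : 'M[R]_n) (u v : 'cV[R]_n) :
  (u^T *m X *m v) 0 0 = \sum_i \sum_j u i 0 * X i j * v j 0.
Proof.
rewrite mxE; under eq_bigr do rewrite mxE big_distrl /=.
rewrite exchange_big; apply: eq_bigr => i _; apply: eq_bigr => j _.
by rewrite !mxE.
Qed.

Lemma qformE n (X : 'M[R]_n) v :
  qform X v = \sum_i \sum_j v i 0 * X i j * v j 0.
Proof. exact: bilinear_formE. Qed.

Lemma sqnormE n (v : 'cV[R]_n) : sqnorm v = \sum_i v i 0 ^+ 2.
Proof.
rewrite /sqnorm /qform mulmx1 mxE.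
by apply: eq_bigr => i _; rewrite !mxE expr2.
Qed.

Lemma qformN n (X : 'M[R]_n) v : qform (- X) v = - qform X v.
Proof. by rewrite /qform mulmxN mulNmx mxE. Qed.

Lemma qformZ n (X : 'M[R]_n) a v : qform X (a *: v) = a ^+ 2 * qform X v.
Proof.
by rewrite /qform linearZ /= linearZ /= -!scalemxAl scalerA mxE expr2.
Qed.

Lemma sqr_coord_le_sqnorm n (v : 'cV[R]_n) i : v i 0 ^+ 2 <= sqnorm v.
Proof.
by rewrite sqnormE (bigD1 i) //= lerDl sumr_ge0 // => j _; exact: sqr_ge0.
Qed.

Lemma sqnorm_ge0 n (v : 'cV[R]_n) : 0 <= sqnorm v.
Proof. by rewrite sqnormE sumr_ge0 // => i _; exact: sqr_ge0. Qed.

Lemma sqnorm_gt0 n (v : 'cV[R]_n) : v != 0 -> 0 < sqnorm v.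
Proof.
move=> v0; rewrite lt_def sqnorm_ge0 andbT; apply: contra v0.
rewrite sqnormE psumr_eq0 => [/allP v_eq0|i _]; last exact: sqr_ge0.
apply/eqP/matrixP => i j; rewrite (ord1 j) mxE.
by apply/eqP; rewrite -sqrf_eq0; exact: v_eq0 (mem_index_enum _).
Qed.

Lemma qform_trmx_continuous n (X : 'M[R]_n) :
  continuous (fun u : 'rV[R]_n => qform X u^T).
Proof.
have coord i : continuous (fun u : 'rV[R]_n => u^T i 0).
  move=> u; under eq_fun do rewrite mxE; exact: coord_continuous.
under eq_fun do rewrite qformE.
apply: continuous_big => [|i _]; first exact: add_continuous.
apply: continuous_big => [|j _ u]; first exact: add_continuous.
have cst : {for u, continuous (fun=> X i j)} by exact: cst_continuous.
exact: continuousM (continuousM (coord i u) cst) (coord j u).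
Qed.

Definition normalize n (v : 'cV[R]_n) : 'cV[R]_n := (Num.sqrt (sqnorm v))^-1 *: v.

Lemma normalizeP n (X : 'M[R]_n) (v : 'cV[R]_n) : v != 0 ->
  sqnorm (normalize v) = 1 /\ qform X v = sqnorm v * qform X (normalize v).
Proof.
move=> /sqnorm_gt0 v_gt0; rewrite /sqnorm /normalize !qformZ -/(sqnorm v).
rewrite exprVn sqr_sqrtr ?ltW // mulrA divff ?gt_eqF // mulVf ?gt_eqF //.
by rewrite mul1r.
Qed.

Lemma unit_sphere_compact n : compact [set u : 'rV[R]_n | sqnorm u^T = 1].
Proof.
apply: (subclosed_compact _ (rV_compact (fun=> @segment_compact R (-1) 1))).
  apply: (@preimage_closed _ _ (fun u : 'rV[R]_n => sqnorm u^T) [set 1]).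
    by move=> u _; exact: qform_trmx_continuous.
  exact: closed_eq.
move=> u /= u1 i; have := sqr_coord_le_sqnorm u^T i; rewrite u1 mxE => ui_le1.
rewrite in_itv /= -ler_norml -(@ler_pXn2r _ 2) ?nnegrE //.
by rewrite expr1n real_normK ?num_real.
Qed.

(* Rayleigh-quotient bound: a quadratic form is bounded below by a multiple of
   the squared norm, with a positive constant when the form is positive
   definite; the constant is the minimum of the form on the unit sphere. *)
Lemma qform_lower_bound n (X : 'M[R]_n) : exists c,
  (forall v, c * sqnorm v <= qform X v) /\
  ((forall v, v != 0 -> 0 < qform X v) -> 0 < c).
Proof.
case: n X => [|n] X.
  exists 1; split=> [v|_]; last exact: ltr01.
  by rewrite (flatmx0 v) /sqnorm /qform !(mulmx0, mul0mx) mxE mulr0.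
pose K := [set u : 'rV[R]_n.+1 | sqnorm u^T = 1].
have KP v : v != 0 -> K (normalize v)^T.
  by move=> /(normalizeP X)[+ _]; rewrite /K /= trmxK.
have K_neq0 : K !=set0.
  exists (normalize (const_mx 1))^T; apply: KP.
  by apply/eqP => /matrixP/(_ 0 0); rewrite !mxE; exact/eqP/oner_neq0.
have X_cont : {within K, continuous (fun u : 'rV[R]_n.+1 => qform X u^T)}.
  by apply: continuous_subspaceT; exact: qform_trmx_continuous.
have [u /[!inE] Ku u_min] :=
  compact_EVT_min K_neq0 (@unit_sphere_compact n.+1) X_cont.
exists (qform X u^T); split=> [v|X_pos]; last first.
  apply: X_pos; apply: contra_eqN Ku => /eqP ->.
  by rewrite /sqnorm /qform !(mulmx0, mul0mx) mxE eq_sym oner_eq0.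
have [->|v0] := eqVneq v 0.
  by rewrite /sqnorm /qform !(mulmx0, mul0mx) !mxE mulr0.
have [_ ->] := normalizeP X v0; rewrite mulrC ler_wpM2l ?sqnorm_ge0 //.
by have := u_min _ (mem_set (KP v v0)); rewrite trmxK.
Qed.

Lemma qform_upper_bound n (X : 'M[R]_n) :
  exists2 C, 0 < C & forall v, qform X v <= C * sqnorm v.
Proof.
have [c [c_lb _]] := qform_lower_bound (- X).
exists (`|c| + 1) => [|v]; first by rewrite ltr_wpDl.
have := c_lb v; rewrite qformN lerNr => /le_trans; apply.
by rewrite -mulNr ler_wpM2r ?sqnorm_ge0 // (le_trans (ler_norm _)) ?normrN ?lerDl.
Qed.

Lemma qform_uniform_lower_bound n (I : finType) (W : I -> 'M[R]_n) :
  (forall k v, v != 0 -> 0 < qform (W k) v) ->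
  exists2 c, 0 < c & forall k v, c * sqnorm v <= qform (W k) v.
Proof.
move=> W_pos.
suff [c c0 c_lb] : exists2 c, 0 < c & forall k, k \in enum I ->
    forall v, c * sqnorm v <= qform (W k) v.
  by exists c => // k; apply: c_lb; rewrite mem_enum.
elim: (enum I) => [|k s [c c0 c_lb]]; first by exists 1.
have [d [d_lb /(_ (W_pos k)) d0]] := qform_lower_bound (W k).
exists (Num.min c d) => [|k']; first by rewrite lt_min c0 d0.
rewrite in_cons => /predU1P[->|k's] v.
  by apply: le_trans (d_lb v); rewrite ler_wpM2r ?sqnorm_ge0 ?ge_min ?lexx ?orbT.
by apply: le_trans (c_lb _ k's v); rewrite ler_wpM2r ?sqnorm_ge0 ?ge_min ?lexx.
Qed.

End QuadraticForms.

Section PiecewiseDerivative.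
Variables (R : realType) (m : nat) (sigma : R -> 'I_m).

Definition has_pw_derive (f df : R -> R) : Prop :=
  {within [set t : R | 0 <= t], continuous f} /\
  (forall t, 0 < t -> loc_const sigma t -> is_derive t 1 f (df t)).

Lemma pw_deriveD f df g dg : has_pw_derive f df -> has_pw_derive g dg ->
  has_pw_derive (fun t => f t + g t) (fun t => df t + dg t).
Proof.
move=> [cf hf] [cg hg]; split.
  by move=> t; exact: (continuousD (cf t) (cg t)).
by move=> t t0 lt; exact: is_deriveD (hf _ t0 lt) (hg _ t0 lt).
Qed.

Lemma pw_deriveM f df g dg : has_pw_derive f df -> has_pw_derive g dg ->
  has_pw_derive (fun t => f t * g t) (fun t => f t * dg t + g t * df t).
Proof.
move=> [cf hf] [cg hg]; split.
  by move=> t; exact: (continuousM (cf t) (cg t)).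
by move=> t t0 lt; exact: is_deriveM (hf _ t0 lt) (hg _ t0 lt).
Qed.

Lemma pw_derive_cst c : has_pw_derive (fun=> c) (fun=> 0).
Proof. by split=> [t|t _ _]; [exact: cst_continuous | exact: is_derive_cst]. Qed.

Lemma pw_derive_id : has_pw_derive id (fun=> 1).
Proof.
split=> [|t _ _]; last exact: is_derive_id.
by apply: continuous_subspaceT => t; exact: cvg_id.
Qed.

Lemma eq_pw_derive f df dg : has_pw_derive f df -> df =1 dg -> has_pw_derive f dg.
Proof. by move=> [cf hf] e; split=> // t t0 lt; rewrite -e; exact: hf. Qed.

Lemma pw_derive_sum (I : eqType) (r : seq I) (f df : I -> R -> R) :
  (forall i, has_pw_derive (f i) (df i)) ->
  has_pw_derive (fun t => \sum_(i <- r) f i t) (fun t => \sum_(i <- r) df i t).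
Proof.
move=> hf; elim: r => [|i r IHr].
  under eq_fun do rewrite big_nil.
  by apply: (eq_pw_derive (pw_derive_cst 0)) => t; rewrite big_nil.
under eq_fun do rewrite big_cons.
by apply: (eq_pw_derive (pw_deriveD (hf i) IHr)) => t; rewrite big_cons.
Qed.

Definition has_pw_deriveV (k : nat) (u du : R -> 'cV[R]_k) : Prop :=
  forall i, has_pw_derive (fun t => u t i 0) (fun t => du t i 0).

Lemma pw_deriveV_mulmx p q (B : 'M[R]_(p, q)) u du : has_pw_deriveV u du ->
  has_pw_deriveV (fun t => B *m u t) (fun t => B *m du t).
Proof.
move=> hu i.
have hsum := pw_derive_sum (index_enum 'I_q)
  (fun j => pw_deriveM (pw_derive_cst (B i j)) (hu j)).
have -> : (fun t => (B *m u t) i 0) = (fun t => \sum_j B i j * u t j 0).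
  by apply: funext => t; rewrite mxE.
by apply: (eq_pw_derive hsum) => t; rewrite mxE; apply: eq_bigr => j _;
  rewrite mulr0 addr0.
Qed.

Lemma pw_deriveV_qform k (X : 'M[R]_k) u du : has_pw_deriveV u du ->
  has_pw_derive (fun t => qform X (u t))
    (fun t => ((du t)^T *m X *m u t + (u t)^T *m X *m du t) 0 0).
Proof.
move=> hu.
have hsum := pw_derive_sum (index_enum 'I_k) (fun i =>
  pw_derive_sum (index_enum 'I_k) (fun j =>
    pw_deriveM (pw_deriveM (hu i) (pw_derive_cst (X i j))) (hu j))).
have -> : (fun t => qform X (u t)) =
          (fun t => \sum_i \sum_j u t i 0 * X i j * u t j 0).
  by apply: funext => t; rewrite qformE.
apply: (eq_pw_derive hsum) => t; rewrite mxE !bilinear_formE -big_split.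
by apply: eq_bigr => i _; rewrite -big_split; apply: eq_bigr => j _ /=; ring.
Qed.

(* mean value theorem on an interval free of switching instants *)
Lemma pw_derive_nonincr_regular f df a b : has_pw_derive f df ->
  (forall t, 0 < t -> loc_const sigma t -> df t <= 0) ->
  0 <= a -> a <= b -> (forall t, a < t < b -> loc_const sigma t) -> f b <= f a.
Proof.
move=> [f_cont f_der] df_le0 a0 ab ab_reg.
have ab_pos t : t \in `]a, b[%R -> 0 < t /\ loc_const sigma t.
  rewrite in_itv /= => /andP[lt_at lt_tb].
  by split; [exact: le_lt_trans a0 lt_at | apply: ab_reg; rewrite lt_at lt_tb].
have f_der1 t : t \in `]a, b[%R -> derivable f t 1.
  by move=> /ab_pos[t0 /(f_der t t0)[]].
have df1_le0 t : t \in `]a, b[%R -> f^`() t <= 0.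
  move=> /ab_pos[t0 tr]; have := f_der t t0 tr; rewrite derive1E => hd.
  by rewrite derive_val df_le0.
have f_cont_ab : {within `[a, b], continuous f}.
  apply: continuous_subspaceW f_cont => t /=; rewrite in_itv /= => /andP[+ _].
  exact: le_trans.
by apply: (ler0_derive1_le_cc f_der1 df1_le0 f_cont_ab) => //;
  rewrite in_itv /= lexx ab.
Qed.

Lemma pw_derive_nonincr f df : has_pw_derive f df -> switching_signal sigma ->
  (forall t, 0 < t -> loc_const sigma t -> df t <= 0) ->
  forall a b, 0 <= a -> a <= b -> f b <= f a.
Proof.
move=> hf sw df_le0 a b a0 ab; have [s s_sw] := sw b.
suff : forall (l : seq R) a' b', a <= a' -> a' <= b' -> b' <= b ->
    (forall t, a' < t < b' -> t \in s -> t \in l) -> f b' <= f a'.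
  by apply=> //= t _; exact.
elim=> [|p l IHl] a' b' aa' ab' b'b hl.
  apply: (pw_derive_nonincr_regular hf) => // [|t /andP[a't tb']].
    exact: le_trans aa'.
  apply: s_sw.
    by rewrite (le_lt_trans (le_trans a0 aa') a't) (le_trans (ltW tb')).
  by apply/negP => /(hl t); rewrite a't tb' => /(_ isT).
have shrink a'' b'' : a' <= a'' -> b'' <= b' -> ~~ (a'' < p < b'') ->
    forall t, a'' < t < b'' -> t \in s -> t \in l.
  move=> a'a'' b''b' p_out t /andP[a''t tb''] ts.
  have := hl t; rewrite (le_lt_trans a'a'' a''t) (lt_le_trans tb'' b''b') /=.
  by move=> /(_ isT ts)/predU1P[tp|//]; move: p_out; rewrite -tp a''t tb''.
have [/andP[a'p pb']|p_out] := boolP (a' < p < b').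
  2: exact: IHl (shrink _ _ _ _ _).
apply: (@le_trans _ _ (f p)).
  apply: (IHl p b' (le_trans aa' (ltW a'p)) (ltW pb') b'b).
  by apply: shrink (ltW a'p) (lexx _) _; rewrite ltxx.
apply: (IHl a' p aa' (ltW a'p) (le_trans (ltW pb') b'b)).
by apply: shrink (lexx _) (ltW pb') _; rewrite ltxx andbF.
Qed.

Lemma pw_derive0_const f : has_pw_derive f (fun=> 0) -> switching_signal sigma ->
  forall t, 0 <= t -> f t = f 0.
Proof.
move=> hf sw t t0; apply/eqP; rewrite eq_le.
rewrite (pw_derive_nonincr hf sw) //=.
have hNf := pw_deriveM (pw_derive_cst (-1)) hf.
have := pw_derive_nonincr hNf sw _ (lexx 0) t0.
by rewrite !mulN1r lerN2; apply=> *; rewrite mulr0 addr0 oppr0.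
Qed.

(* Lyapunov decay with a linear rate: if df <= - a f and f >= 0, then
   (1 + a t) f t <= f 0; the weight 1 + a t avoids the exponential. *)
Lemma pw_derive_decay f df a : has_pw_derive f df -> switching_signal sigma ->
  0 <= a -> (forall t, 0 <= t -> 0 <= f t) ->
  (forall t, 0 < t -> loc_const sigma t -> df t <= - a * f t) ->
  forall t, 0 <= t -> (1 + a * t) * f t <= f 0.
Proof.
move=> hf sw a0 f_ge0 df_le t t0.
have hg := pw_deriveM (pw_deriveD (pw_derive_cst 1)
  (pw_deriveM (pw_derive_cst a) pw_derive_id)) hf.
have := pw_derive_nonincr hg sw _ (lexx 0) t0.
rewrite mulr0 addr0 mul1r; apply=> u u0 /(df_le u u0) dfu.
have fu := f_ge0 u (ltW u0).
rewrite /= !mulr0 !addr0 mulr1 add0r.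
have w0 : 0 <= 1 + a * u by rewrite addr_ge0 // mulr_ge0 ?(ltW u0).
have auf0 : 0 <= a * a * u * f u by rewrite !mulr_ge0 ?(ltW u0).
have := ler_wpM2l w0 dfu; lra.
Qed.

End PiecewiseDerivative.

Section LaplacianProjection.
Variable R : realType.

Lemma laplacian_ones n (A : 'M[R]_n) : signed_laplacian A *m ones R n = 0.
Proof.
apply/matrixP => i j; rewrite !mxE.
under eq_bigr do rewrite !mxE mulr1.
rewrite sumrB (bigD1 i) //= eqxx mul1r.
rewrite [\sum_(l | l != i) _]big1 ?addr0 ?subrr // => l.
by rewrite eq_sym => /negbTE ->; rewrite mul0r.
Qed.

Lemma weight_balanced_ones n (L : 'M[R]_n) :
  weight_balanced L -> (ones R n)^T *m L = 0.
Proof. by move=> wb; rewrite -[L]trmxK -trmx_mul wb trmx0. Qed.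

Section OrthonormalComplement.
Variables (n : nat) (Q : 'M[R]_(n, n.+1)).
Hypotheses (QQ : Q *m Q^T = 1%:M) (Q1 : Q *m ones R n.+1 = 0).

Lemma orthonormal_complement_proj :
  Q^T *m Q = 1%:M - ones R n.+1 *m ((n.+1)%:R^-1)%:M *m (ones R n.+1)^T.
Proof.
pose C : 'M[R]_(1 + n, n.+1) := col_mx (ones R n.+1)^T Q.
pose D : 'M[R]_(1 + n) := block_mx ((n.+1)%:R^-1)%:M 0 0 1%:M.
have ones_sqnorm : (ones R n.+1)^T *m ones R n.+1 = (n.+1)%:R%:M.
  apply/matrixP => i j; rewrite !mxE; under eq_bigr do rewrite !mxE mul1r.
  by rewrite (ord1 i) (ord1 j) sumr_const card_ord eqxx mulr1n.
have ones_Q : (ones R n.+1)^T *m Q^T = 0 by rewrite -trmx_mul Q1 trmx0.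
have C_inv : C *m (C^T *m D) = 1%:M.
  rewrite mulmxA /C tr_col_mx trmxK mul_col_row Q1 ones_sqnorm QQ ones_Q.
  rewrite /D mulmx_block !mulmx0 !mul0mx !addr0 !add0r mulmx1.
  by rewrite -scalar_mxM mulfV ?pnatr_eq0 // -scalar_mx_block.
move: (mulmx1C C_inv); rewrite /C /D tr_col_mx trmxK mul_row_block.
rewrite !mulmx0 !addr0 add0r mulmx1 => <-; apply/eqP.
by rewrite eq_sym subr_eq addrC (@mul_row_col _ _ 1 n).
Qed.

Lemma orthonormal_decomposition (v : 'cV[R]_n.+1) :
  v = Q^T *m (Q *m v) +
      ((n.+1)%:R^-1 * ((ones R n.+1)^T *m v) 0 0) *: ones R n.+1.
Proof.
rewrite mulmxA orthonormal_complement_proj mulmxBl mul1mx.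
rewrite -!mulmxA [_^T *m v]mx11_scalar mul_scalar_mx scale_scalar_mx.
by rewrite mul_mx_scalar -mx11_scalar subrK.
Qed.

Lemma mulmx_proj_ker (L : 'M[R]_n.+1) :
  L *m ones R n.+1 = 0 -> L *m (Q^T *m Q) = L.
Proof.
move=> L1; rewrite orthonormal_complement_proj mulmxBr mulmx1 !mulmxA L1.
by rewrite !mul0mx subr0.
Qed.

Lemma reduced_dynamics (L : 'M[R]_n.+1) (v : 'cV[R]_n.+1) :
  L *m ones R n.+1 = 0 -> Q *m (L *m v) = (Q *m L *m Q^T) *m (Q *m v).
Proof. by move=> L1; rewrite -{1}(mulmx_proj_ker L1) !mulmxA. Qed.

Lemma pos_def_compress (P : 'M[R]_n.+1) : pos_def P -> pos_def (Q *m P *m Q^T).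
Proof.
move=> [P_sym P_pos]; split; first by rewrite !trmx_mul trmxK P_sym mulmxA.
move=> v v0; have QTv0 : Q^T *m v != 0.
  by apply: contraNneq v0 => QTv; rewrite -[v]mul1mx -QQ -mulmxA QTv mulmx0.
by have := P_pos _ QTv0; rewrite trmx_mul trmxK !mulmxA.
Qed.

Lemma reduced_lyapunov_ineq (L P : 'M[R]_n.+1) :
  L *m ones R n.+1 = 0 ->
  neg_def (- (Q *m L *m P *m Q^T) - (Q *m P *m L^T *m Q^T)) ->
  forall v, v != 0 -> 0 < qform ((Q *m L *m Q^T) *m (Q *m P *m Q^T) +
                                  (Q *m P *m Q^T) *m (Q *m L *m Q^T)^T) v.
Proof.
move=> L1 [_ L_neg] v v0.
have LP : (Q *m L *m Q^T) *m (Q *m P *m Q^T) = Q *m L *m P *m Q^T.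
  by rewrite !mulmxA -(mulmxA _ Q^T) -(mulmxA Q) mulmx_proj_ker.
have PL : (Q *m P *m Q^T) *m (Q *m L *m Q^T)^T = Q *m P *m L^T *m Q^T.
  have QQL : (Q^T *m Q) *m L^T = L^T.
    by rewrite -{2}(mulmx_proj_ker L1) !trmx_mul trmxK.
  rewrite !trmx_mul trmxK !mulmxA -(mulmxA _ Q^T Q).
  by rewrite -(mulmxA _ (Q^T *m Q)) QQL.
by rewrite LP PL -oppr_lt0 -qformN opprD; exact: L_neg.
Qed.

End OrthonormalComplement.

End LaplacianProjection.

Section LyapunovDual.
Variable R : realType.

Lemma pos_def_unitmx n (P : 'M[R]_n) : pos_def P -> P \in unitmx.
Proof.
move=> [_ P_pos]; rewrite -row_free_unit; apply: inj_row_free => w wP0.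
apply/eqP; apply: contraT => w0.
have wT0 : w^T != 0 by apply: contraNneq w0 => wT0; rewrite -[w]trmxK wT0 trmx0.
by have := P_pos _ wT0; rewrite trmxK wP0 mul0mx mxE ltxx.
Qed.

Lemma qform_congr_pos n (T Y : 'M[R]_n) : T \in unitmx ->
  (forall v, v != 0 -> 0 < qform Y v) ->
  forall v, v != 0 -> 0 < qform (T^T *m Y *m T) v.
Proof.
move=> T_unit Y_pos v v0; have Tv0 : T *m v != 0.
  by apply: contraNneq v0 => Tv; rewrite -(mulKmx T_unit v) Tv mulmx0.
by have := Y_pos _ Tv0; rewrite /qform trmx_mul !mulmxA.
Qed.

Lemma lyapunov_dual n (Pr : 'M[R]_n) :
  pos_def Pr -> (forall v, v != 0 -> 0 < qform (invmx Pr) v) /\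
  forall M, (forall v, v != 0 -> 0 < qform (M *m Pr + Pr *m M^T) v) ->
  forall v, v != 0 -> 0 < qform (invmx Pr *m M + M^T *m invmx Pr) v.
Proof.
move=> Pr_pd; have Pr_unit := pos_def_unitmx Pr_pd.
have X_unit : invmx Pr \in unitmx by rewrite unitmx_inv.
have XT : (invmx Pr)^T = invmx Pr by rewrite trmx_inv Pr_pd.1.
split=> [|M MP_pos].
  have := qform_congr_pos X_unit Pr_pd.2.
  by rewrite XT mulVmx // mul1mx.
have := qform_congr_pos X_unit MP_pos.
rewrite XT mulmxDr mulmxDl !mulmxA mulVmx // mul1mx.
by rewrite -(mulmxA _ Pr) mulmxV // mulmx1.
Qed.

End LyapunovDual.

Section SwitchedSystems.
Variables (R : realType) (m : nat) (sigma : R -> 'I_m).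

Lemma switched_linear_decay n (M : 'I_m -> 'M[R]_n) (X : 'M[R]_n)
    (y : R -> 'cV[R]_n) :
  switching_signal sigma ->
  has_pw_deriveV sigma y (fun t => - (M (sigma t) *m y t)) ->
  (forall v, v != 0 -> 0 < qform X v) ->
  (forall k v, v != 0 -> 0 < qform (X *m M k + (M k)^T *m X) v) ->
  exists2 a, 0 < a & exists B, forall t, 0 <= t ->
    (1 + a * t) * sqnorm (y t) <= B.
Proof.
move=> sw hy X_pos XM_pos.
have [cW cW0 cW_lb] := qform_uniform_lower_bound XM_pos.
have [cX [cX_lb /(_ X_pos) cX0]] := qform_lower_bound X.
have [CX CX0 CX_ub] := qform_upper_bound X.
have V_ge0 t : 0 <= qform X (y t).
  by apply: le_trans (cX_lb _); rewrite mulr_ge0 ?sqnorm_ge0 ?(ltW cX0).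
have dV t : ((- (M (sigma t) *m y t))^T *m X *m y t +
             (y t)^T *m X *m - (M (sigma t) *m y t)) 0 0 =
            - qform (X *m M (sigma t) + (M (sigma t))^T *m X) (y t).
  rewrite -qformN /qform !mulmxN mulNmx !linearN /= !mulNmx trmx_mul.
  by rewrite mulmxDr mulmxDl opprD addrC !mulmxA.
have a0 : 0 < cW / CX by rewrite divr_gt0.
have decay := pw_derive_decay (pw_deriveV_qform X hy) sw (ltW a0)
  (fun t _ => V_ge0 t).
exists (cW / CX) => //; exists (qform X (y 0) / cX) => t t0.
rewrite ler_pdivlMr // mulrAC; apply: le_trans (decay _ _ t0).
  by rewrite -mulrA ler_wpM2l ?cX_lb // addr_ge0 // mulr_ge0 ?(ltW a0).
move=> u _ _; rewrite dV mulNr lerN2; apply: le_trans (cW_lb _ _).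
by rewrite -mulrA (ler_wpM2l (ltW cW0)) // mulrC ler_pdivrMr // mulrC CX_ub.
Qed.

Lemma switched_sum_invariant n (L : 'I_m -> 'M[R]_n) (x : R -> 'cV[R]_n) :
  switching_signal sigma -> (forall k, weight_balanced (L k)) ->
  has_pw_deriveV sigma x (fun t => - L (sigma t) *m x t) ->
  forall t, 0 <= t -> ((ones R n)^T *m x t) 0 0 = ((ones R n)^T *m x 0) 0 0.
Proof.
move=> sw wb hx; apply: (pw_derive0_const _ sw).
apply: (eq_pw_derive (pw_deriveV_mulmx (ones R n)^T hx 0)) => t.
by rewrite mulmxA mulmxN weight_balanced_ones // oppr0 mul0mx mxE.
Qed.

End SwitchedSystems.

Lemma decay_cvg0 (R : realType) n (y : R -> 'cV[R]_n) (a B : R) :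
  0 < a -> (forall t, 0 <= t -> (1 + a * t) * sqnorm (y t) <= B) ->
  forall j, (fun t => y t j 0) @ +oo --> 0.
Proof.
move=> a0 yB j; apply/cvgrPdist_lt => e e0.
have B0 : 0 <= B.
  by apply: le_trans (yB 0 (lexx 0)); rewrite mulr0 addr0 mul1r sqnorm_ge0.
have ae0 : 0 < a * e ^+ 2 by rewrite mulr_gt0 // exprn_gt0.
exists (B / (a * e ^+ 2)); split; first exact: num_real.
move=> t /= tM; rewrite sub0r normrN -(@ltr_pXn2r _ 2) ?nnegrE ?(ltW e0) //.
have t0 : 0 <= t by apply: le_trans (ltW tM); rewrite divr_ge0 ?(ltW ae0).
rewrite real_normK ?num_real //; apply: le_lt_trans (sqr_coord_le_sqnorm _ j) _.
move: tM; rewrite ltr_pdivrMr // => tM.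
have w0 : 0 <= 1 + a * t by rewrite addr_ge0 // mulr_ge0 ?(ltW a0).
rewrite ltNge; apply/negP => /(ler_wpM2l w0)/le_trans/(_ (yB t t0)).
have : 0 < e ^+ 2 by rewrite exprn_gt0.
lra.
Qed.

Lemma consensus_limit (R : realType) n (Q : 'M[R]_(n, n.+1))
    (x : R -> 'cV[R]_n.+1) (alpha : R) :
  (forall j, (fun t => (Q *m x t) j 0) @ +oo --> 0) ->
  (forall t, 0 <= t -> x t = Q^T *m (Q *m x t) + alpha *: ones R n.+1) ->
  forall i, (fun t => x t i 0) @ +oo --> alpha.
Proof.
move=> Qx0 x_split i.
have lim : (fun t => \sum_j Q j i * (Q *m x t) j 0 + alpha) @ +oo --> alpha.
  rewrite -[X in _ --> X]add0r; apply: cvgD; last exact: cvg_cst.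
  rewrite [X in _ --> X](_ : 0 = \sum_j Q j i * 0); last first.
    by rewrite big1 // => j _; rewrite mulr0.
  by apply: cvg_big => [|j _]; [exact: add_continuous | exact: cvgMl_tmp].
apply: cvg_trans lim; apply: near_eq_cvg; near=> t.
have t0 : 0 <= t by near: t; exists 0; split=> // t /ltW.
rewrite {2}(x_split t t0) !mxE mulr1.
by congr (_ + _); apply: eq_bigr => j _; rewrite [Q^T i j]mxE.
Unshelve. all: by end_near.
Qed.

Theorem theorem9 (R : realType) (n m : nat)
    (A : 'I_m -> 'M[R]_(n.+1))
    (Q : 'M[R]_(n, n.+1)) :
  (forall k, weight_balanced (signed_laplacian (A k))) ->
  (forall k, EEP (- signed_laplacian (A k))) ->
  Q *m Q^T = 1%:M ->
  Q *m ones R n.+1 = 0 ->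
  (exists P : 'M[R]_(n.+1), pos_def P /\
     forall k, neg_def (- (Q *m signed_laplacian (A k) *m P *m Q^T)
                        - (Q *m P *m (signed_laplacian (A k))^T *m Q^T))) ->
  consensus_set (fun k => signed_laplacian (A k)).
Proof.
move=> wb _ QQ Q1 [P [P_pd lmi]] sigma sw x [x_cont x_der].
pose L k := signed_laplacian (A k).
pose M k := Q *m L k *m Q^T.
have L1 k : L k *m ones R n.+1 = 0 := laplacian_ones (A k).
have hx : has_pw_deriveV sigma x (fun t => - L (sigma t) *m x t).
  by move=> i; split=> // t t0 /x_der; exact.
have hy : has_pw_deriveV sigma (fun t => Q *m x t)
                                (fun t => - (M (sigma t) *m (Q *m x t))).
  move=> i; apply: (eq_pw_derive (pw_deriveV_mulmx Q hx i)) => t.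
  by rewrite mulNmx mulmxN (reduced_dynamics QQ Q1).
have [X_pos XM_pos] := lyapunov_dual (pos_def_compress QQ P_pd).
have [a a0 [B yB]] := switched_linear_decay sw hy X_pos
  (fun k => XM_pos _ (reduced_lyapunov_ineq QQ Q1 (L1 k) (lmi k))).
exists ((n.+1)%:R^-1 * ((ones R n.+1)^T *m x 0) 0 0).
apply: consensus_limit (decay_cvg0 a0 yB) _ => t t0.
rewrite -(switched_sum_invariant sw wb hx t0).
exact: orthonormal_decomposition.
Qed.
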